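(* Let $x_0>0$ and let $u:[x_0,b)\to(0,\infty)$ be a solution of $\frac{u''}{1+(u')^2}=\frac{xu'}{2}-\frac u2+\frac{n-1}{u}$ with $u(x_0)<\sqrt{2(n-1)}$ and $u'(x_0)=0$. Then $u$ is strictly convex on $[x_0,b)$.
   Context: $n\ge2$ is a fixed integer. *)

From Stdlib Require Import Reals.
From Coquelicot Require Import Coquelicot.
Open Scope R_scope.

Definition in_Ico (x0 : R) (b : Rbar) (x : R) : Prop :=
  x0 <= x /\ Rbar_lt x b.

Definition deriv_on_Ico (x0 : R) (b : Rbar) (f f' : R -> R) : Prop :=
  forall x, in_Ico x0 b x ->
    filterlim (fun y => (f y - f x) / (y - x))
      (within (fun y => in_Ico x0 b y /\ y <> x) (locally x))
      (locally (f' x)).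

Definition strictly_convex_on_Ico (x0 : R) (b : Rbar) (f : R -> R) : Prop :=
  forall x y t, in_Ico x0 b x -> in_Ico x0 b y -> x <> y -> 0 < t < 1 ->
    f (t * x + (1 - t) * y) < t * f x + (1 - t) * f y.

From Stdlib Require Import Reals Lra Psatz Classical.
From Coquelicot Require Import Coquelicot.
Open Scope R_scope.

(* Put c = n - 1 and phi = x u'/2 - u/2 + c/u, so that u'' = (1 + u'^2) phi and
   phi(x0) = (2c - u(x0)^2) / (2 u(x0)) > 0.  If u'' vanished, let x1 be its first
   zero; then u' > 0 on (x0, x1].  The quantity M = 2 (u phi)' = x u'^2 + x u u'' - u u'
   is positive at x0 and equals -2c u'/u < 0 at x1, yet
   M' = x (1 + u'^2) M / 2 + 2 x u' u'' (1 + u phi) is positive wherever M is, so M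
   cannot reach 0 before x1.  Hence u'' > 0, u' increases and u is strictly convex. *)

Lemma mvt_open (f df : R -> R) (a b : R) : a < b ->
  (forall x, a < x < b -> is_derive f x (df x)) ->
  (forall x, a <= x <= b -> continuity_pt f x) ->
  exists c, a < c < b /\ f b - f a = df c * (b - a).
Proof.
  intros Hab Hd Hc.
  pose (pr1 c (Hc' : a < c < b) :=
    exist (derivable_pt_abs f c) (df c) (proj1 (is_derive_Reals _ _ _) (Hd c Hc'))).
  pose (pr2 c (_ : a < c < b) := derivable_pt_id c).
  destruct (MVT f id a b pr1 pr2 Hab Hc (fun c _ => continuity_pt_id c)) as [c [Hc' E]].
  exists c; split; [exact Hc'|].
  rewrite (derive_pt_eq_0 f c (df c) (pr1 c Hc')) in E
    by exact (proj1 (is_derive_Reals _ _ _) (Hd c Hc')).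
  rewrite derive_pt_id in E. unfold id in E. lra.
Qed.

Lemma continuity_pt_pos_near (h : R -> R) (m : R) : continuity_pt h m -> 0 < h m ->
  exists d, 0 < d /\ forall y, Rabs (y - m) < d -> 0 < h y.
Proof.
  intros Hc Hm.
  destruct (proj1 (continuity_pt_locally h m) Hc (mkposreal _ Hm)) as [d Hd].
  exists d; split; [apply cond_pos|].
  intros y Hy. specialize (Hd y Hy). apply Rabs_def2 in Hd. simpl in Hd. lra.
Qed.

Lemma continuity_pt_neg_near (h : R -> R) (m : R) : continuity_pt h m -> h m < 0 ->
  exists d, 0 < d /\ forall y, Rabs (y - m) < d -> h y < 0.
Proof.
  intros Hc Hm.
  destruct (continuity_pt_pos_near (fun y => - h y) m) as [d [Hd Hnear]].
  - exact (continuity_pt_opp h m Hc).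
  - lra.
  - exists d; split; [exact Hd|]. intros y Hy. specialize (Hnear y Hy). simpl in Hnear. lra.
Qed.

Lemma first_zero (h : R -> R) (a c : R) : a < c ->
  (forall t, a <= t <= c -> continuity_pt h t) -> 0 < h a -> h c <= 0 ->
  exists m, a < m <= c /\ h m = 0 /\ forall t, a <= t < m -> 0 < h t.
Proof.
  intros Hac Hc Ha Hcn.
  set (E x := a <= x <= c /\ forall t, a <= t <= x -> 0 < h t).
  assert (HaE : E a) by (split; [lra|intros t Ht; replace t with a by lra; exact Ha]).
  assert (HE : bound E) by (exists c; intros x [Hx _]; lra).
  destruct (completeness E HE (ex_intro _ a HaE)) as [m [Hub Hlub]].
  assert (Ham : a <= m) by (apply Hub; exact HaE).
  assert (Hmc : m <= c) by (apply Hlub; intros x [Hx _]; lra).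
  assert (Hbelow : forall t, a <= t < m -> 0 < h t).
  { intros t Ht. apply NNPP; intros Hnt.
    assert (m <= t); [|lra].
    apply Hlub; intros x [_ Hx]. apply Rnot_lt_le; intros Htx.
    apply Hnt, Hx; lra. }
  assert (Hm_nonpos : h m <= 0).
  { apply Rnot_lt_le; intros Hm.
    destruct (continuity_pt_pos_near h m (Hc m (conj Ham Hmc)) Hm) as [d [Hd Hnear]].
    assert (Hmc' : m < c) by (destruct (Req_dec m c); [subst; lra|lra]).
    set (y := Rmin (m + d / 2) c).
    assert (Hy : E y).
    { split; [unfold y; split; [apply Rmin_glb|apply Rmin_r]; lra|].
      intros t Ht. destruct (Rlt_le_dec t m); [apply Hbelow; lra|].
      apply Hnear. assert (t <= m + d / 2) by (eapply Rle_trans; [apply Ht|apply Rmin_l]).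
      apply Rabs_def1; lra. }
    assert (m < y) by (unfold y; apply Rmin_glb_lt; lra).
    specialize (Hub y Hy). lra. }
  assert (Hm_nonneg : 0 <= h m).
  { apply Rnot_lt_le; intros Hm.
    destruct (continuity_pt_neg_near h m (Hc m (conj Ham Hmc)) Hm) as [d [Hd Hnear]].
    assert (Ham' : a < m) by (destruct (Req_dec a m); [subst; lra|lra]).
    set (t := Rmax a (m - d / 2)).
    assert (Ht : a <= t < m) by (unfold t; split; [apply Rmax_l|apply Rmax_lub_lt; lra]).
    assert (m - d / 2 <= t) by apply Rmax_r.
    specialize (Hbelow t Ht). specialize (Hnear t ltac:(apply Rabs_def1; lra)). lra. }
  exists m. split; [|split; [lra|exact Hbelow]].
  split; [|exact Hmc]. destruct (Req_dec a m); [subst; lra|lra].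
Qed.

Lemma Rbar_lt_locally (x : R) (b : Rbar) : Rbar_lt x b ->
  exists d, 0 < d /\ forall y, y < x + d -> Rbar_lt y b.
Proof.
  destruct b as [r| |]; simpl; intros H; try contradiction.
  - exists (r - x). split; [lra|]. intros y Hy. simpl. lra.
  - exists 1. split; [lra|]. intros; exact I.
Qed.

Lemma in_Ico_between (x0 : R) (b : Rbar) (s t r : R) :
  in_Ico x0 b s -> in_Ico x0 b t -> s <= r <= t -> in_Ico x0 b r.
Proof.
  intros [Hs _] [_ Ht] Hr. split; [lra|].
  apply Rbar_le_lt_trans with t; [simpl; lra|exact Ht].
Qed.

(* Extending f by the constant f x0 to the left turns the one-sided derivative at x0
   into plain continuity, which is what the mean value theorem needs at that end. *)
Definition extend_left (x0 : R) (f : R -> R) (x : R) : R := f (Rmax x0 x).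

Lemma extend_left_eq (x0 : R) (f : R -> R) (x : R) : x0 <= x -> extend_left x0 f x = f x.
Proof. intros H. unfold extend_left. rewrite Rmax_right; auto. Qed.

Section DerivOnIco.

Variables (x0 : R) (b : Rbar) (f f' : R -> R).
Hypothesis hf : deriv_on_Ico x0 b f f'.

Lemma deriv_on_Ico_quotient (x : R) : in_Ico x0 b x -> forall eps, 0 < eps ->
  exists d, 0 < d /\ forall y, in_Ico x0 b y -> y <> x -> Rabs (y - x) < d ->
    Rabs ((f y - f x) / (y - x) - f' x) < eps.
Proof.
  intros Hx eps Heps.
  destruct (hf x Hx _ (locally_ball (f' x) (mkposreal eps Heps))) as [d Hd].
  exists d; split; [apply cond_pos|].
  intros y Hy Hyx Hd'. exact (Hd y Hd' (conj Hy Hyx)).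
Qed.

Lemma extend_left_continuity (x : R) : in_Ico x0 b x -> continuity_pt (extend_left x0 f) x.
Proof.
  intros Hx.
  destruct (deriv_on_Ico_quotient x Hx 1 Rlt_0_1) as [d1 [Hd1 Hq]].
  destruct (Rbar_lt_locally x b (proj2 Hx)) as [d2 [Hd2 Hb]].
  set (K := Rabs (f' x) + 1).
  assert (HK : 0 < K) by (pose proof (Rabs_pos (f' x)); unfold K; lra).
  apply continuity_pt_locally; intros eps.
  assert (Hd : 0 < Rmin (Rmin d1 d2) (eps / K)).
  { apply Rmin_pos; [apply Rmin_pos; lra|apply Rdiv_lt_0_compat; [apply cond_pos|lra]]. }
  exists (mkposreal _ Hd); intros y Hy. change (Rabs (y - x) < Rmin (Rmin d1 d2) (eps / K)) in Hy.
  unfold extend_left. rewrite (Rmax_right x0 x) by apply Hx.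
  set (z := Rmax x0 y).
  assert (Hzx : Rabs (z - x) <= Rabs (y - x)).
  { unfold z, Rmax. destruct (Rle_dec x0 y); [lra|].
    destruct Hx. rewrite !Rabs_left1; lra. }
  assert (Hzx' : Rmin (Rmin d1 d2) (eps / K) > Rabs (z - x)) by lra.
  apply Rmin_Rgt_l in Hzx' as [Hzx' Hzeps]. apply Rmin_Rgt_l in Hzx' as [Hzd1 Hzd2].
  destruct (Req_dec z x) as [->|Hne].
  { unfold Rminus. rewrite Rplus_opp_r, Rabs_R0. apply cond_pos. }
  assert (Hz : in_Ico x0 b z).
  { split; [apply Rmax_l|]. apply Hb. apply Rabs_def2 in Hzd2. lra. }
  specialize (Hq z Hz Hne Hzd1).
  assert (Hslope : Rabs ((f z - f x) / (z - x)) <= K).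
  { pose proof (Rabs_triang_inv ((f z - f x) / (z - x)) (f' x)). unfold K. lra. }
  replace (f z - f x) with ((f z - f x) / (z - x) * (z - x)) by (field; lra).
  rewrite Rabs_mult.
  apply Rle_lt_trans with (K * Rabs (z - x)).
  - apply Rmult_le_compat_r; [apply Rabs_pos|exact Hslope].
  - apply Rmult_lt_reg_r with (/ K); [apply Rinv_0_lt_compat; lra|].
    replace (K * Rabs (z - x) * / K) with (Rabs (z - x)) by (field; lra).
    replace (eps * / K) with (eps / K) by reflexivity.
    exact Hzeps.
Qed.

Lemma extend_left_is_derive (x : R) : x0 < x -> Rbar_lt x b ->
  is_derive (extend_left x0 f) x (f' x).
Proof.
  intros Hx0 Hxb.
  assert (Hx : in_Ico x0 b x) by (split; [lra|exact Hxb]).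
  destruct (Rbar_lt_locally x b Hxb) as [d2 [Hd2 Hb]].
  apply is_derive_Reals; intros eps Heps.
  destruct (deriv_on_Ico_quotient x Hx eps Heps) as [d1 [Hd1 Hq]].
  assert (Hd : 0 < Rmin (Rmin d1 d2) (x - x0)) by (repeat apply Rmin_pos; lra).
  exists (mkposreal _ Hd); intros h Hh0 Hh. simpl in Hh.
  apply Rmin_Rgt_l in Hh as [Hh Hhx0]. apply Rmin_Rgt_l in Hh as [Hhd1 Hhd2].
  apply Rabs_def2 in Hhd2 as [Hhd2 _]. apply Rabs_def2 in Hhx0 as [_ Hhx0].
  assert (Hxh : in_Ico x0 b (x + h)) by (split; [lra|apply Hb; lra]).
  specialize (Hq (x + h) Hxh ltac:(lra) ltac:(replace (x + h - x) with h by ring; exact Hhd1)).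
  rewrite !extend_left_eq by lra.
  replace (x + h - x) with h in Hq by ring. exact Hq.
Qed.

Lemma deriv_on_Ico_mvt (s t : R) : in_Ico x0 b s -> in_Ico x0 b t -> s < t ->
  exists xi, s < xi < t /\ f t - f s = f' xi * (t - s).
Proof.
  intros Hs Ht Hst.
  rewrite <- (extend_left_eq x0 f s), <- (extend_left_eq x0 f t) by (apply Hs || apply Ht).
  apply mvt_open; [exact Hst| |].
  - intros r Hr. apply extend_left_is_derive; [destruct Hs; lra|].
    apply (in_Ico_between x0 b s t r Hs Ht); lra.
  - intros r Hr. apply extend_left_continuity, (in_Ico_between x0 b s t r Hs Ht Hr).
Qed.

Lemma deriv_on_Ico_increasing : (forall x, in_Ico x0 b x -> 0 < f' x) ->
  forall s t, in_Ico x0 b s -> in_Ico x0 b t -> s < t -> f s < f t.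
Proof.
  intros Hpos s t Hs Ht Hst.
  destruct (deriv_on_Ico_mvt s t Hs Ht Hst) as [xi [Hxi E]].
  assert (0 < f' xi * (t - s)); [|lra].
  apply Rmult_lt_0_compat; [|lra].
  apply Hpos, (in_Ico_between x0 b s t xi Hs Ht); lra.
Qed.

Lemma strictly_convex_on_Ico_of_deriv_increasing :
  (forall s t, in_Ico x0 b s -> in_Ico x0 b t -> s < t -> f' s < f' t) ->
  strictly_convex_on_Ico x0 b f.
Proof.
  intros Hincr.
  assert (Hlt : forall x y t, in_Ico x0 b x -> in_Ico x0 b y -> x < y -> 0 < t < 1 ->
    f (t * x + (1 - t) * y) < t * f x + (1 - t) * f y).
  { intros x y t Hx Hy Hxy Ht.
    set (z := t * x + (1 - t) * y).
    assert (Hz : x < z < y) by (unfold z; split; nra).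
    assert (Hzi : in_Ico x0 b z) by (apply (in_Ico_between x0 b x y z Hx Hy); lra).
    destruct (deriv_on_Ico_mvt x z Hx Hzi (proj1 Hz)) as [e1 [He1 E1]].
    destruct (deriv_on_Ico_mvt z y Hzi Hy (proj2 Hz)) as [e2 [He2 E2]].
    assert (Hslopes : f' e1 < f' e2).
    { apply Hincr; [| |lra]; apply (in_Ico_between x0 b x y); auto; lra. }
    assert (Hw : 0 < t * (1 - t) * (y - x)) by (apply Rmult_lt_0_compat; nra).
    assert (Hz1 : z - x = (1 - t) * (y - x)) by (unfold z; ring).
    assert (Hz2 : y - z = t * (y - x)) by (unfold z; ring).
    rewrite Hz1 in E1. rewrite Hz2 in E2.
    assert (t * (1 - t) * (y - x) * f' e1 < t * (1 - t) * (y - x) * f' e2)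
      by (apply Rmult_lt_compat_l; assumption).
    nra. }
  intros x y t Hx Hy Hxy Ht.
  destruct (Rlt_or_le x y) as [H|H]; [now apply Hlt|].
  replace (t * x + (1 - t) * y) with ((1 - t) * y + (1 - (1 - t)) * x) by ring.
  replace (t * f x + (1 - t) * f y) with ((1 - t) * f y + (1 - (1 - t)) * f x) by ring.
  apply Hlt; auto; lra.
Qed.

End DerivOnIco.

Ltac solve_continuity_pt :=
  repeat first [ assumption | apply continuity_pt_id
               | apply continuity_pt_const; intros ? ?; reflexivity
               | apply continuity_pt_mult | apply continuity_pt_plus | apply continuity_pt_minus
               | apply continuity_pt_opp | apply continuity_pt_inv ].

Section ODE.

Variables (c x0 : R) (b : Rbar) (u u' u'' : R -> R).
Hypotheses (hc : 0 < c) (hx0 : 0 < x0) (hb : Rbar_lt x0 b)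
  (hpos : forall x, in_Ico x0 b x -> 0 < u x)
  (hu' : deriv_on_Ico x0 b u u') (hu'' : deriv_on_Ico x0 b u' u'')
  (hode : forall x, in_Ico x0 b x ->
     u'' x = (1 + u' x ^ 2) * (x * u' x / 2 - u x / 2 + c / u x))
  (hinit : u x0 ^ 2 < 2 * c) (hinit' : u' x0 = 0).

Let U := extend_left x0 u.
Let P := extend_left x0 u'.
Let phi (t : R) := t * P t / 2 - U t / 2 + c / U t.
Let W (t : R) := (1 + P t ^ 2) * phi t.
Let M (t : R) := t * P t ^ 2 + t * U t * W t - U t * P t.
Let dM (t : R) := t * (1 + P t ^ 2) * M t / 2 + 2 * t * P t * W t * (1 + U t * phi t).

Lemma U_pos (t : R) : in_Ico x0 b t -> 0 < U t.
Proof. intros Ht. unfold U. rewrite extend_left_eq by apply Ht. auto. Qed.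

Lemma second_derivative_eq_W (t : R) : in_Ico x0 b t -> u'' t = W t.
Proof.
  intros Ht. unfold W, phi, U, P. rewrite !extend_left_eq by apply Ht. auto.
Qed.

Lemma W_M_continuity (t : R) : in_Ico x0 b t -> continuity_pt W t /\ continuity_pt M t.
Proof.
  intros Ht.
  assert (HU := extend_left_continuity x0 b u u' hu' t Ht).
  assert (HP := extend_left_continuity x0 b u' u'' hu'' t Ht).
  assert (HU0 : U t <> 0) by (apply Rgt_not_eq, U_pos, Ht).
  unfold M, W, phi; split; solve_continuity_pt.
Qed.

Lemma U_is_derive (r : R) : x0 < r -> Rbar_lt r b -> is_derive U r (P r).
Proof.
  intros Hr Hrb. unfold P. rewrite extend_left_eq by lra.
  exact (extend_left_is_derive x0 b u u' hu' r Hr Hrb).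
Qed.

Lemma P_is_derive (r : R) : x0 < r -> Rbar_lt r b -> is_derive P r (W r).
Proof.
  intros Hr Hrb. rewrite <- second_derivative_eq_W by (split; [lra|exact Hrb]).
  exact (extend_left_is_derive x0 b u' u'' hu'' r Hr Hrb).
Qed.

Lemma M_is_derive (r : R) : x0 < r -> Rbar_lt r b ->
  is_derive M r (dM r).
Proof.
  intros Hr Hrb.
  assert (HU0 : U r <> 0) by (apply Rgt_not_eq, U_pos; split; [lra|exact Hrb]).
  assert (DU := U_is_derive r Hr Hrb). assert (DP := P_is_derive r Hr Hrb).
  unfold dM, M, W, phi. auto_derive.
  - repeat split; try exact HU0; eexists; eassumption.
  - replace (Derive (fun x => U x) r) with (P r) by (symmetry; exact (is_derive_unique _ _ _ DU)).
    replace (Derive (fun x => P x) r) with (W r) by (symmetry; exact (is_derive_unique _ _ _ DP)).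
    unfold W, phi. field. exact HU0.
Qed.

Lemma W_x0_pos : 0 < W x0.
Proof.
  assert (Hx0 : in_Ico x0 b x0) by (split; [lra|exact hb]).
  assert (HU0 := U_pos x0 Hx0).
  unfold W, phi, U, P in *. rewrite !extend_left_eq in * by lra. rewrite hinit'.
  replace ((1 + 0 ^ 2) * (x0 * 0 / 2 - u x0 / 2 + c / u x0))
    with ((2 * c - u x0 ^ 2) / (2 * u x0)) by (field; lra).
  apply Rdiv_lt_0_compat; lra.
Qed.

Lemma M_x0_pos : 0 < M x0.
Proof.
  assert (HU := U_pos x0 (conj (Rle_refl x0) hb)). assert (HW := W_x0_pos).
  unfold M. replace (P x0) with 0 by (unfold P; rewrite extend_left_eq by lra; auto).
  assert (0 < x0 * U x0 * W x0) by (apply Rmult_lt_0_compat; [apply Rmult_lt_0_compat|]; assumption).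
  lra.
Qed.

Lemma M_neg_at_W_zero (t : R) : in_Ico x0 b t -> 0 < P t -> W t = 0 -> M t < 0.
Proof.
  intros Ht HPt HWt. assert (HU := U_pos t Ht).
  assert (Hphi : phi t = 0).
  { unfold W in HWt. apply Rmult_integral in HWt as [H|H]; [nra|exact H]. }
  unfold M, phi in *. rewrite HWt.
  replace (t * P t ^ 2 + t * U t * 0 - U t * P t)
    with (P t * (2 * (t * P t / 2 - U t / 2 + c / U t)) - 2 * c * P t / U t) by (field; lra).
  rewrite Hphi.
  assert (0 < 2 * c * P t / U t) by (apply Rdiv_lt_0_compat; nra). lra.
Qed.

Lemma dM_pos (t : R) : in_Ico x0 b t -> 0 < P t -> 0 < W t -> 0 < M t -> 0 < dM t.
Proof.
  intros Ht HPt HWt HMt.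
  assert (HU := U_pos t Ht). assert (Htpos : 0 < t) by (destruct Ht; lra).
  assert (HP2 : 0 < 1 + P t ^ 2) by nra.
  assert (Hphi : 0 < phi t) by (unfold W in HWt; nra).
  assert (0 < U t * phi t) by (apply Rmult_lt_0_compat; assumption).
  unfold dM. apply Rplus_lt_0_compat.
  - apply Rdiv_lt_0_compat; [|lra].
    apply Rmult_lt_0_compat; [apply Rmult_lt_0_compat|]; assumption.
  - apply Rmult_lt_0_compat; [|lra].
    apply Rmult_lt_0_compat; [apply Rmult_lt_0_compat; [lra|exact HPt]|exact HWt].
Qed.

Lemma W_no_first_zero (x1 : R) : x0 < x1 -> Rbar_lt x1 b -> W x1 = 0 ->
  (forall t, x0 <= t < x1 -> 0 < W t) -> False.
Proof.
  intros Hx1 Hx1b HWx1 Hbelow.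
  assert (Hin : forall r, x0 <= r <= x1 -> in_Ico x0 b r).
  { intros r Hr. split; [lra|]. apply Rbar_le_lt_trans with x1; [simpl; lra|exact Hx1b]. }
  assert (HP : forall r, x0 < r <= x1 -> 0 < P r).
  { intros r Hr.
    destruct (deriv_on_Ico_mvt x0 b u' u'' hu'' x0 r (Hin x0 ltac:(lra)) (Hin r ltac:(lra))
                (proj1 Hr)) as [xi [Hxi E]].
    rewrite hinit', second_derivative_eq_W in E by (apply Hin; lra).
    unfold P; rewrite extend_left_eq by lra.
    assert (0 < W xi * (r - x0)) by (apply Rmult_lt_0_compat; [apply Hbelow|]; lra). lra. }
  assert (HM1 := M_neg_at_W_zero x1 (Hin x1 ltac:(lra)) (HP x1 ltac:(lra)) HWx1).
  destruct (first_zero M x0 x1 Hx1) as [x2 [Hx2 [HMx2 HMbelow]]]; [|exact M_x0_pos|lra|].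
  { intros r Hr. apply W_M_continuity, Hin, Hr. }
  destruct (mvt_open M dM x0 x2 (proj1 Hx2)) as [xi [Hxi E]].
  { intros r Hr. apply M_is_derive; [lra|]. apply Hin; lra. }
  { intros r Hr. apply W_M_continuity, Hin; lra. }
  assert (HdM : 0 < dM xi).
  { apply dM_pos; [apply Hin; lra|apply HP; lra|apply Hbelow; lra|apply HMbelow; lra]. }
  pose proof M_x0_pos. assert (0 < dM xi * (x2 - x0)) by (apply Rmult_lt_0_compat; lra). lra.
Qed.

Lemma W_pos (t : R) : in_Ico x0 b t -> 0 < W t.
Proof.
  intros Ht. apply Rnot_le_lt; intros HWt.
  assert (Hx0 : in_Ico x0 b x0) by (split; [lra|exact hb]).
  assert (Htx0 : x0 < t).
  { destruct (Req_dec x0 t) as [<-|Hne]; [pose proof W_x0_pos; lra|destruct Ht; lra]. }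
  destruct (first_zero W x0 t Htx0) as [x1 [Hx1 [HWx1 Hbelow]]].
  - intros r Hr. apply W_M_continuity, (in_Ico_between x0 b x0 t r Hx0 Ht Hr).
  - exact W_x0_pos.
  - exact HWt.
  - apply (W_no_first_zero x1 (proj1 Hx1)); [|exact HWx1|exact Hbelow].
    apply (in_Ico_between x0 b x0 t x1 Hx0 Ht); lra.
Qed.

Lemma ode_second_derivative_pos (t : R) : in_Ico x0 b t -> 0 < u'' t.
Proof. intros Ht. rewrite second_derivative_eq_W by exact Ht. apply W_pos, Ht. Qed.

End ODE.

Theorem lemma2p10 (n : nat) (hn : (2 <= n)%nat)
  (x0 : R) (b : Rbar) (u u' u'' : R -> R)
  (hx0 : 0 < x0) (hb : Rbar_lt x0 b)
  (hpos : forall x, in_Ico x0 b x -> 0 < u x)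
  (hu' : deriv_on_Ico x0 b u u')
  (hu'' : deriv_on_Ico x0 b u' u'')
  (hode : forall x, in_Ico x0 b x ->
     u'' x / (1 + (u' x) ^ 2) = x * u' x / 2 - u x / 2 + (INR n - 1) / u x)
  (hinit : u x0 < sqrt (2 * (INR n - 1)))
  (hinit' : u' x0 = 0) :
  strictly_convex_on_Ico x0 b u.
Proof.
  assert (Hc : 0 < INR n - 1) by (apply le_INR in hn; simpl in hn; lra).
  assert (Hode : forall x, in_Ico x0 b x ->
    u'' x = (1 + u' x ^ 2) * (x * u' x / 2 - u x / 2 + (INR n - 1) / u x)).
  { intros x Hx. rewrite <- hode by exact Hx. field. nra. }
  assert (Hinit : u x0 ^ 2 < 2 * (INR n - 1)).
  { assert (Hu0 : 0 < u x0) by (apply hpos; split; [lra|exact hb]).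
    rewrite <- (sqrt_sqrt (2 * (INR n - 1))) by lra.
    pose proof (sqrt_pos (2 * (INR n - 1))). nra. }
  apply (strictly_convex_on_Ico_of_deriv_increasing x0 b u u' hu').
  apply (deriv_on_Ico_increasing x0 b u' u'' hu'').
  exact (ode_second_derivative_pos (INR n - 1) x0 b u u' u'' Hc hx0 hb hpos hu' hu'' Hode Hinit hinit').
Qed.
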